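(* Let $\mathbb{R}^n_s$ be $\mathbb{R}^n$ with a non-degenerate symmetric bilinear form of signature $(n-s,s)$, and let $G\subset\mathrm{Iso}(\mathbb{R}^n_s)\subset\mathrm{GL}_{n+1}(\mathbb{R})$ be a real Zariski-closed subgroup whose centralizer in $\mathrm{Iso}(\mathbb{R}^n_s)$ acts transitively on $\mathbb{R}^n$, with Lie algebra $\mathfrak{g}\subset\mathrm{Mat}_{n+1}(\mathbb{R})$. Then $G=I+\mathfrak{g}$ is an affine subspace of $\mathrm{Mat}_{n+1}(\mathbb{R})$; let $\nabla^G$ be the natural flat affine connection it inherits. Fix $p\in\mathbb{R}^n$, let $F_p=G.p$ (an affine subspace of $\mathbb{R}^n$), and let $\nabla$ be the pullback to $G$ of the natural flat affine connection of $F_p$ via the orbit map $\theta:G\to F_p$, $g\mapsto g.p$ (a diffeomorphism). Then $(G,\nabla^G)$ is affinely diffeomorphic to $(G,\nabla)$.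
   Context: Elements of $\mathrm{Iso}(\mathbb{R}^n_s)$ are affine maps $(I+A,v)$ identified with matrices $\begin{pmatrix}I+A&v\\0&1\end{pmatrix}$. *)

From HB Require Import structures.
From mathcomp Require Import all_boot all_order all_algebra.
From mathcomp Require Import all_classical all_reals.
From mathcomp Require Import topology normedtype derive.
Set Implicit Arguments. Unset Strict Implicit. Unset Printing Implicit Defensive.
Import Order.TTheory GRing.Theory Num.Theory.
Local Open Scope ring_scope.
Local Open Scope classical_set_scope.

Section Defs.
Variable R : realType.

Definition has_signature (n : nat) (B : 'M[R]_n) (p q : nat) : Prop :=
  (p + q)%N = n /\
  exists P : 'M[R]_n, P \in unitmx /\
    P^T *m B *m P = diag_mx (\row_(i < n) (if (i < p)%N then 1 else -1)).

Definition Iso (n : nat) (B : 'M[R]_n) : set 'M[R]_(n + 1) :=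
  [set M | exists (L : 'M[R]_n) (v : 'cV[R]_n),
     M = block_mx L v 0 1%:M /\ L^T *m B *m L = B].

Definition act (n : nat) (g : 'M[R]_(n + 1)) (p : 'cV[R]_n) : 'cV[R]_n :=
  usubmx (g *m col_mx p 1%:M).

Inductive polyfun (m : nat) : ('M[R]_m -> R) -> Prop :=
| pf_const (c : R) : polyfun (fun _ => c)
| pf_coord (i j : 'I_m) : polyfun (fun M => M i j)
| pf_add f g : polyfun f -> polyfun g -> polyfun (fun M => f M + g M)
| pf_mul f g : polyfun f -> polyfun g -> polyfun (fun M => f M * g M).

Definition zariski_closed (m : nat) (G : set 'M[R]_m) : Prop :=
  exists S : set ('M[R]_m -> R), (forall f, S f -> polyfun f) /\
    forall M, G M <-> (forall f, S f -> f M = 0).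

Definition is_subgroup (m : nat) (G : set 'M[R]_m) : Prop :=
  G 1%:M /\ (forall x y, G x -> G y -> G (x *m y)) /\
  (forall x, G x -> x \in unitmx /\ G (invmx x)).

Definition centralizer_in (m : nat) (H G : set 'M[R]_m) : set 'M[R]_m :=
  [set h | H h /\ forall g, G g -> h *m g = g *m h].

Definition lie_algebra (m : nat) (G : set 'M[R]_m) : set 'M[R]_m :=
  [set X | exists gamma : R -> 'M[R]_m,
     (forall t, G (gamma t)) /\ gamma 0 = 1%:M /\
     forall i j : 'I_m,
       derivable (fun t : R^o => (gamma t i j : R^o)) (0 : R^o) (1 : R^o) /\
       derive1 (fun t : R^o => (gamma t i j : R^o)) 0 = X i j].

Definition affine_set (V : lmodType R) (A : set V) : Prop :=
  forall x y (t : R), A x -> A y -> A ((1 - t) *: x + t *: y).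

(* f is affine on the affine subspace A (i.e. preserves affine combinations
   of points of A): this is compatibility with the natural flat connections *)
Definition affine_on (V W : lmodType R) (A : set V) (f : V -> W) : Prop :=
  forall x y (t : R), A x -> A y ->
    f ((1 - t) *: x + t *: y) = (1 - t) *: f x + t *: f y.

End Defs.

(* Every g in G satisfies (g - 1)^2 = 0.  If h centralizes G and h.0 = x, then
   g.x = h.(g.0), so g moves each point x by a vector h.w of the same B-length as
   its translation part w; a quadratic form that is constant along the affine map
   x |-> (g - 1) x + w forces (g - 1)^2 = 0 once B is nondegenerate.  In a
   Zariski-closed group such an element 1 + N spans the whole line 1 + tN (a
   polynomial vanishing at every natural number is zero), and
   1 + (N + M) = (1 + N/2)(1 + M)(1 + N/2) because N and M anticommute.  Hence
   G = I + g is an affine subspace; as g |-> g.p is the restriction of a linear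
   map, the identity of G is the required affine diffeomorphism. *)

From HB Require Import structures.
From mathcomp Require Import all_boot all_order all_algebra.
From mathcomp Require Import all_classical all_reals.
From mathcomp Require Import topology normedtype derive.
From mathcomp Require Import ring lra.
Import numFieldNormedType.Exports.
Set Implicit Arguments. Unset Strict Implicit. Unset Printing Implicit Defensive.
Import Order.TTheory GRing.Theory Num.Theory.
Local Open Scope ring_scope.
Local Open Scope classical_set_scope.

Section Action.
Variables (R : realType) (n : nat).
Implicit Types (M : 'M[R]_(n + 1)) (L : 'M[R]_n) (q v : 'cV[R]_n).

Lemma act_block L v q : act (block_mx L v 0 1%:M) q = L *m q + v.
Proof. by rewrite /act mul_block_col mul1mx mulmx1 col_mxKu. Qed.

Lemma act_mul_block M L v q :
  act (M *m block_mx L v 0 1%:M) q = act M (act (block_mx L v 0 1%:M) q).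
Proof. by rewrite act_block /act -mulmxA mul_block_col mul1mx mulmx1 mul0mx add0r. Qed.

Lemma act_lincomb (a b : R) M1 M2 q :
  act (a *: M1 + b *: M2) q = a *: act M1 q + b *: act M2 q.
Proof. by rewrite /act mulmxDl -!scalemxAl linearD !linearZ. Qed.

Lemma act_affine (A : set 'M[R]_(n + 1)) q : affine_on A (fun M => act M q).
Proof. by move=> x y t _ _; rewrite act_lincomb. Qed.

Lemma orbit_affine_set (A : set 'M[R]_(n + 1)) q :
  affine_set A -> affine_set ((fun M => act M q) @` A).
Proof.
move=> Aaff _ _ t [x Ax <-] [y Ay <-].
by exists ((1 - t) *: x + t *: y); [exact: Aaff | rewrite act_lincomb].
Qed.

Lemma block_mx_sub1 L v :
  block_mx L v 0 1%:M - 1%:M = block_mx (L - 1%:M) v 0 0 :> 'M[R]_(n + 1).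
Proof.
by rewrite [X in _ - X](scalar_mx_block n 1) opp_block_mx add_block_mx !oppr0 !addr0 subrr.
Qed.

End Action.

Section Forms.
Variables (R : realFieldType) (n : nat).
Implicit Types (S : 'M[R]_n) (x y c : 'cV[R]_n).

Lemma trmx_mx11 (a : 'M[R]_1) : a^T = a.
Proof. by apply/matrixP => i j; rewrite !ord1 mxE. Qed.

Lemma bilinear_form_eq0 S : (forall x y, (x^T *m S *m y) 0 0 = 0) -> S = 0.
Proof.
move=> S0; apply/matrixP => i j.
by rewrite mxE -(S0 (delta_mx i 0) (delta_mx j 0)) trmx_delta -rowE -colE !mxE.
Qed.

Lemma linear_form_eq0 c : (forall x, (x^T *m c) 0 0 = 0) -> c = 0.
Proof.
move=> c0; apply/matrixP => i j.
by rewrite ord1 mxE -(c0 (delta_mx i 0)) trmx_delta -rowE !mxE.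
Qed.

Lemma quadratic_eq0 S c : S^T = S ->
  (forall x, (x^T *m S *m x) 0 0 + 2 * (x^T *m c) 0 0 = 0) -> S = 0 /\ c = 0.
Proof.
move=> Ssym Q0.
have Q0N x : (x^T *m S *m x) 0 0 - 2 * (x^T *m c) 0 0 = 0.
  by have := Q0 (- x); rewrite mulmxN [(- x)^T]raddfN !mulNmx opprK [X in 2 * X]mxE mulrN.
have Sx0 x : (x^T *m S *m x) 0 0 = 0 by have := Q0 x; have := Q0N x; lra.
split; last by apply: linear_form_eq0 => x; have := Q0 x; have := Q0N x; lra.
apply: bilinear_form_eq0 => x y.
have Ssymxy : (y^T *m S *m x) 0 0 = (x^T *m S *m y) 0 0.
  by rewrite -[y^T *m S *m x]trmx_mx11 !trmx_mul trmxK Ssym mulmxA mxE.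
have := Sx0 (x + y); rewrite [(x + y)^T]raddfD /= !mulmxDl !mulmxDr !mxE.
have := Sx0 x; have := Sx0 y; move: Ssymxy; rewrite !mxE; lra.
Qed.

End Forms.

Section Isometries.
Variables (R : realFieldType) (n : nat) (B : 'M[R]_n).
Hypothesis Bsym : B^T = B.
Implicit Types (K L : 'M[R]_n) (w x : 'cV[R]_n).

Lemma quadratic_translate_const K w :
  (forall x, (K *m x + w)^T *m B *m (K *m x + w) = w^T *m B *m w) ->
  K^T *m B *m K = 0 /\ K^T *m B *m w = 0.
Proof.
move=> Kw_const; apply: quadratic_eq0; first by rewrite !trmx_mul trmxK Bsym mulmxA.
move=> x; have := Kw_const x.
have cross : w^T *m B *m (K *m x) = x^T *m (K^T *m B *m w).
  by rewrite -[LHS]trmx_mx11 !trmx_mul trmxK Bsym !mulmxA.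
rewrite [(K *m x + w)^T]raddfD /= trmx_mul !mulmxDl !mulmxDr cross !mulmxA.
move=> /(congr1 (fun a : 'M[R]_1 => a 0 0)).
move: (x^T *m K^T *m B *m K *m x) (x^T *m K^T *m B *m w) (w^T *m B *m w) => a b c.
by rewrite !mxE; lra.
Qed.

Lemma const_displacement_unipotent L w : \det B != 0 -> L^T *m B *m L = B ->
  (forall x, ((L - 1%:M) *m x + w)^T *m B *m ((L - 1%:M) *m x + w) = w^T *m B *m w) ->
  (L - 1%:M) *m (L - 1%:M) = 0 /\ (L - 1%:M) *m w = 0.
Proof.
move=> Bdet LisoB; rewrite -[L](subrK 1%:M) addrK in LisoB *.
move: (L - 1%:M) LisoB => K LisoB Kw_const.
have [KBK KBw] := quadratic_translate_const Kw_const.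
have KtB : K^T *m B = - (B *m K).
  move: LisoB; rewrite [(K + 1%:M)^T]raddfD /= trmx1 !mulmxDl !mulmxDr mul1mx !mulmx1 KBK add0r.
  by rewrite addrA -[X in _ = X]add0r => /addIr /eqP; rewrite addr_eq0 => /eqP.
have BK_eq0 X : K^T *m B *m X = 0 -> K *m X = 0.
  rewrite KtB mulNmx -mulmxA => /eqP; rewrite oppr_eq0 => /eqP /(congr1 (mulmx (invmx B))).
  by rewrite mulKmx ?mulmx0 // unitmxE unitfE.
by split; apply: BK_eq0.
Qed.

End Isometries.

Section CentralizerTransitive.
Variables (R : realType) (n : nat) (B : 'M[R]_n) (G : set 'M[R]_(n + 1)).
Hypothesis GisoB : G `<=` Iso B.
Hypothesis centralizer_transitive : forall p q : 'cV[R]_n,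
  exists h, centralizer_in (Iso B) G h /\ act h p = q.

Lemma act_centralizer h g q : centralizer_in (Iso B) G h -> G g ->
  act g (act h q) = act h (act g q).
Proof.
move=> [[Lh [vh [eh _]]] hC] Gg; have [Lg [vg [eg _]]] := GisoB Gg.
by rewrite {1}eh -act_mul_block -eh -hC // {1}eg act_mul_block -eg.
Qed.

Lemma orbit_injective p : {in G &, injective (fun g => act g p)}.
Proof.
move=> x y /set_mem Gx /set_mem Gy /= exy.
have act_xy q : act x q = act y q.
  have [h [hC <-]] := centralizer_transitive p q.
  by rewrite (act_centralizer _ hC Gx) (act_centralizer _ hC Gy) exy.
have [Lx [vx [ex _]]] := GisoB Gx; have [Ly [vy [ey _]]] := GisoB Gy.
rewrite {}ex {}ey in act_xy *.
have vxy : vx = vy by have := act_xy 0; rewrite !act_block !mulmx0 !add0r.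
suff -> : Lx = Ly by rewrite vxy.
apply/matrixP => i j; have := congr1 (fun v : 'cV[R]_n => v i 0) (act_xy (delta_mx j 0)).
by rewrite !act_block vxy -!colE !mxE => /addIr.
Qed.

Hypotheses (Bsym : B^T = B) (Bdet : \det B != 0).

Lemma centralizer_transitive_unipotent g : G g -> (g - 1%:M) *m (g - 1%:M) = 0.
Proof.
move=> Gg; have [L [w [eg LisoB]]] := GisoB Gg.
have [K2 Kw] : (L - 1%:M) *m (L - 1%:M) = 0 /\ (L - 1%:M) *m w = 0.
  apply: (const_displacement_unipotent Bsym Bdet LisoB) => x.
  have [h [hC hx]] := centralizer_transitive 0 x.
  have [[Lh [vh [eh LhisoB]]] _] := hC.
  have vhx : vh = x by rewrite -hx eh act_block mulmx0 add0r.
  have := act_centralizer 0 hC Gg.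
  rewrite hx eg eh !act_block mulmx0 add0r vhx mulmxBl mul1mx addrAC => ->.
  rewrite addrK trmx_mul !mulmxA.
  have -> : w^T *m Lh^T *m B *m Lh = w^T *m (Lh^T *m B *m Lh) by rewrite !mulmxA.
  by rewrite LhisoB.
by rewrite eg block_mx_sub1 mulmx_block K2 Kw !mulmx0 !mul0mx !addr0 block_mx0.
Qed.

End CentralizerTransitive.

Lemma poly_nat_roots_eq0 (R : numDomainType) (q : {poly R}) :
  (forall k : nat, q.[k%:R] = 0) -> q = 0.
Proof.
move=> q_nat0; apply/eqP; apply: contraT => q_neq0.
have := max_poly_roots q_neq0 (rs := [seq k%:R | k <- iota 0 (size q)]).
rewrite size_map size_iota ltnn; apply.
  by apply/allP => _ /mapP [k _ ->]; rewrite /root q_nat0.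
by rewrite map_inj_uniq ?iota_uniq //; apply: (mulrIn (oner_neq0 R)).
Qed.

Lemma polyfun_line (R : realType) m (f : 'M[R]_m -> R) (M N : 'M[R]_m) :
  polyfun f -> exists q : {poly R}, forall t, q.[t] = f (M + t *: N).
Proof.
elim=> [c | i j | f1 f2 _ [q1 q1E] _ [q2 q2E] | f1 f2 _ [q1 q1E] _ [q2 q2E]].
- by exists c%:P => t; rewrite hornerC.
- exists ((M i j)%:P + (N i j)%:P * 'X) => t.
  by rewrite hornerD hornerC hornerM hornerC hornerX !mxE mulrC.
- by exists (q1 + q2) => t; rewrite hornerD q1E q2E.
- by exists (q1 * q2) => t; rewrite hornerM q1E q2E.
Qed.

Lemma polyfun_cvg (R : realType) m (f : 'M[R]_m -> R) (U : R -> 'M[R]_m) (M : 'M[R]_m) :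
  polyfun f -> (forall i j, U t i j @[t --> (0:R)^'] --> M i j) ->
  f (U t) @[t --> (0:R)^'] --> f M.
Proof.
move=> + UM; elim=> [c | i j | f1 f2 _ f1M _ f2M | f1 f2 _ f1M _ f2M].
- exact: cvg_cst.
- exact: UM.
- exact: cvgD.
- exact: cvgM.
Qed.

Lemma derive1_difference_quotient (R : realType) (f : R^o -> R^o) :
  derivable f 0 1 -> t^-1 * (f t - f 0) @[t --> (0:R)^'] --> (derive1 f 0 : R).
Proof.
rewrite derive1E /derivable /derive => df.
suff -> : (fun t : R => t^-1 * (f t - f 0)) =
          (fun h => h^-1 *: ((f \o shift 0) h%:A - f 0)) by [].
by apply: funext => t /=; rewrite addr0 /GRing.scale /= mulr1.
Qed.

Section SquareZeroMatrices.
Variables (R : realFieldType) (m : nat) (N M : 'M[R]_m).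
Hypotheses (NN : N *m N = 0) (MM : M *m M = 0).

(* The hypotheses say that (1 + N)(1 + M) - 1 and (1 - N)(1 + M) - 1 square to 0. *)
Lemma sqr_zero_anticommute :
  (N + M + N *m M) *m (N + M + N *m M) = 0 ->
  (- N + M - N *m M) *m (- N + M - N *m M) = 0 ->
  N *m M + M *m N = 0.
Proof.
have NNX X : N *m (N *m X) = 0 by rewrite mulmxA NN mul0mx.
have MMX X : M *m (M *m X) = 0 by rewrite mulmxA MM mul0mx.
rewrite !mulmxDl !mulmxDr !mulNmx !mulmxN -!mulmxA ?NNX ?MMX ?NN ?MM !mulmx0.
move=> e1 e2.
have anti_MNM : N *m M + M *m N + M *m (N *m M) = 0.
  move: e1 e2; move: (N *m M) (M *m N) (M *m (N *m M)) (N *m (M *m N))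
    (N *m (M *m (N *m M))) => a b c d e e1 e2.
  apply/matrixP => i j; move/matrixP/(_ i j): e1; move/matrixP/(_ i j): e2.
  rewrite !mxE; lra.
have MNM : M *m (N *m M) = 0.
  by have := congr1 (mulmx M) anti_MNM; rewrite !mulmxDr !MMX mulmx0 !addr0.
by move: anti_MNM; rewrite MNM addr0.
Qed.

Lemma conj_half_sqr_zero : N *m M + M *m N = 0 ->
  (1%:M + 2^-1 *: N) *m (1%:M + M) *m (1%:M + 2^-1 *: N) = 1%:M + (N + M).
Proof.
move=> anti.
have NMN : N *m (M *m N) = 0.
  by have := congr1 (mulmx N) anti; rewrite mulmxDr mulmxA NN mul0mx add0r mulmx0.
do 2 rewrite ?mulmxDl ?mulmxDr ?mul1mx ?mulmx1 -?scalemxAl -?scalemxAr.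
rewrite -!mulmxA NN NMN !scaler0 !addr0.
move: anti; move: (N *m M) (M *m N) => a b anti.
by apply/matrixP => i j; move/matrixP/(_ i j): anti; rewrite !mxE; lra.
Qed.

End SquareZeroMatrices.

Section UnipotentGroup.
Variables (R : realType) (m : nat) (G : set 'M[R]_m).
Hypotheses (Gsub : is_subgroup G) (Gzar : zariski_closed G).
Hypothesis Gunip : forall g, G g -> (g - 1%:M) *m (g - 1%:M) = 0.

Let sqr_eq0 (N : 'M[R]_m) : G (1%:M + N) -> N *m N = 0.
Proof. by move=> /Gunip; rewrite addrC addKr. Qed.

Lemma unipotent_natr_line N (k : nat) : G (1%:M + N) -> G (1%:M + k%:R *: N).
Proof.
have [G1 [GM _]] := Gsub; move=> GN.
elim: k => [|k IHk]; first by rewrite scale0r addr0.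
have := GM _ _ IHk GN.
rewrite mulmxDl !mulmxDr !mul1mx mulmx1 -scalemxAl sqr_eq0 // scaler0 addr0.
by rewrite -natr1 scalerDl scale1r addrA addrAC.
Qed.

Lemma unipotent_line N (t : R) : G (1%:M + N) -> G (1%:M + t *: N).
Proof.
have [S [Spoly GS]] := Gzar; move=> GN; apply/GS => f Sf.
have [q qE] := polyfun_line 1%:M N (Spoly f Sf).
rewrite -qE (poly_nat_roots_eq0 (q := q)) ?horner0 // => k.
by rewrite qE; apply: (GS _).1 Sf; apply: unipotent_natr_line.
Qed.

Lemma unipotent_addr N M : G (1%:M + N) -> G (1%:M + M) -> G (1%:M + (N + M)).
Proof.
have [_ [GM _]] := Gsub; move=> GN GM1.
have mul1D (P Q : 'M[R]_m) : (1%:M + P) *m (1%:M + Q) = 1%:M + (P + Q + P *m Q).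
  by rewrite mulmxDl !mulmxDr !mul1mx mulmx1 !addrA (addrAC 1%:M Q).
have GNM := GM _ _ GN GM1; have GNNM := GM _ _ (unipotent_line (-1) GN) GM1.
rewrite mul1D in GNM; rewrite scaleN1r mul1D mulNmx in GNNM.
rewrite -conj_half_sqr_zero ?sqr_eq0 //; last first.
  by apply: sqr_zero_anticommute; apply: sqr_eq0.
have GhN := unipotent_line 2^-1 GN.
exact: GM _ _ (GM _ _ GhN GM1) GhN.
Qed.

Lemma unipotent_group_affine : affine_set G.
Proof.
move=> x y t Gx Gy.
have subK g : 1%:M + (g - 1%:M) = g by rewrite addrC subrK.
have -> : (1 - t) *: x + t *: y = 1%:M + ((1 - t) *: (x - 1%:M) + t *: (y - 1%:M)).
  by apply/matrixP => i j; rewrite !mxE; ring.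
by apply: unipotent_addr; apply: unipotent_line; rewrite subK.
Qed.

Lemma unipotent_sub1_lie_algebra g : G g -> lie_algebra G (g - 1%:M).
Proof.
move=> Gg; exists (fun t => 1%:M + t *: (g - 1%:M)); split.
  by move=> t; apply: unipotent_line; rewrite addrC subrK.
split=> [|i j]; first by rewrite scale0r addr0.
pose c : R^o := 1%:M i j; pose X : R := (g - 1%:M) i j.
have -> : (fun t : R^o => ((1%:M + t *: (g - 1%:M)) i j : R^o)) = cst c + X \*: id.
  by apply: funext => t; rewrite /c /X !mxE /= mulrC.
have [dline lineE] : is_derive (0 : R^o) (1 : R^o) (cst c + X \*: id) (0 + X *: (1 : R^o)).
  exact: is_deriveD.
by split; last rewrite derive1E lineE add0r /GRing.scale /= mulr1.
Qed.

Lemma lie_algebra_unipotent_group X : lie_algebra G X -> G (1%:M + X).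
Proof.
move=> [gamma [Ggamma [gamma0 dgamma]]]; have [S [Spoly GS]] := Gzar.
apply/GS => f Sf.
pose U t := 1%:M + t^-1 *: (gamma t - 1%:M).
have UX i j : U t i j @[t --> (0:R)^'] --> (1%:M + X) i j.
  have [dij dijE] := dgamma i j.
  have -> : (fun t => U t i j) =
      (fun t => 1%:M i j + t^-1 * ((gamma t i j : R^o) - (gamma 0 i j : R^o))).
    by apply: funext => t; rewrite /U gamma0 !mxE.
  rewrite [X in _ --> X]mxE -dijE.
  by apply: cvgD; [exact: cvg_cst | exact: derive1_difference_quotient].
have fU0 : (fun t => f (U t)) = cst 0.
  apply: funext => t; apply: (GS _).1 Sf; rewrite /U.
  by apply: unipotent_line; rewrite addrC subrK.
have := polyfun_cvg (Spoly f Sf) UX; rewrite fU0 => f0.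
exact: norm_cvg_unique f0 (cvg_cst 0).
Qed.

Lemma unipotent_group_lie_algebra : G = [set 1%:M + X | X in lie_algebra G].
Proof.
apply/seteqP; split=> [g Gg | _ [X gX <-]]; last exact: lie_algebra_unipotent_group.
by exists (g - 1%:M); [exact: unipotent_sub1_lie_algebra | rewrite addrC subrK].
Qed.

End UnipotentGroup.

Theorem corollary4p3 (R : realType) (n s : nat) (hs : (s <= n)%N)
  (B : 'M[R]_n) (hBsym : B^T = B) (hBnd : \det B != 0)
  (hsig : has_signature B (n - s) s)
  (G : set 'M[R]_(n + 1))
  (hGsub : is_subgroup G) (hGiso : G `<=` Iso B)
  (hGzar : zariski_closed G)
  (htrans : forall p q : 'cV[R]_n,
      exists h, centralizer_in (Iso B) G h /\ act h p = q)
  (p : 'cV[R]_n) :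
  let g := lie_algebra G in
  let Fp := (fun x => act x p) @` G in
  G = [set 1%:M + X | X in g] /\ affine_set G /\
  affine_set Fp /\ {in G &, injective (fun x => act x p)} /\
  exists phi : 'M[R]_(n + 1) -> 'M[R]_(n + 1),
    (forall x, G x -> G (phi x)) /\
    (forall y, G y -> exists2 x, G x & phi x = y) /\
    {in G &, injective phi} /\
    affine_on G phi /\
    affine_on G (fun x => act (phi x) p).
Proof.
move=> g Fp.
have Gunip := centralizer_transitive_unipotent hGiso htrans hBsym hBnd.
have Gaff := unipotent_group_affine hGsub hGzar Gunip.
split; first exact: unipotent_group_lie_algebra hGsub hGzar Gunip.
split; first exact: Gaff.
split; first exact: orbit_affine_set.
split; first exact: (@orbit_injective _ _ _ _ hGiso htrans p).
exists id; split=> //; split; first by move=> y Gy; exists y.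
split=> //; split; first by move=> x y t.
exact: act_affine.
Qed.
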